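(* Let $w\ge1$ and suppose $\alpha_2^2\le\frac{\ln w}{4}$ and $\alpha_1\sqrt w\ge \ln w$. If at a time $t\in[0,T)$ with $a_t^2\le\frac12$ the solution of the guided probability flow ODE satisfies $$x(t)\le \min\Bigl(\frac{\ln w}{16\alpha_2},\ \frac{\alpha_1\sqrt w}{2\beta}\Bigr),$$ then $$x'(t)\ge\frac{a_t\alpha_1\sqrt w}{2\beta b_t^2}.$$
   Context: Let $0<\alpha_1<\alpha_2$ and $\beta\ge1$. Let $p^{(1)}$ and $p^{(-1)}$ be probability densities on $\mathbb R$ supported on $[\alpha_1,\alpha_2]$ and $[-\alpha_2,-\alpha_1]$ respectively, which are $\beta$-bounded with respect to each other: $\frac1\beta\le \frac{p^{(-1)}(x_1)}{p^{(1)}(x_2)}\le\beta$ for all $x_1\in(-\alpha_2,-\alpha_1)$, $x_2\in(\alpha_1,\alpha_2)$. Let $p=\frac12p^{(1)}+\frac12p^{(-1)}$, and let $(X_0,z)$ be jointly distributed with $z$ uniform on $\{\pm1\}$ and $X_0\mid z\sim p^{(z)}$. Fix $T>0$; for $t\in[0,T]$ put $a_t=e^{t-T}$, $b_t=\sqrt{1-a_t^2}$, and $X_t=a_tX_0+\xi_t$ with $\xi_t\sim\mathcal N(0,b_t^2)$ independent of $(X_0,z)$. Let $p_t$ denote the density of $X_t$ and $p_t(\cdot\mid z=\pm1)$ the conditional density of $X_t$ given $z=\pm1$. For a guidance parameter $w\ge0$, the guided probability flow ODE is $x'(t)=x(t)+(w+1)\nabla\log p_t(x(t)\mid z=1)-w\nabla\log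 p_t(x(t))$, $t\in[0,T)$. *)

From HB Require Import structures.
From mathcomp Require Import all_boot all_order all_algebra.
From mathcomp Require Import all_classical all_reals all_analysis.
Set Implicit Arguments. Unset Strict Implicit. Unset Printing Implicit Defensive.
Import Order.TTheory GRing.Theory Num.Theory.
Import numFieldNormedType.Exports.
Local Open Scope classical_set_scope.
Local Open Scope ring_scope.

Section Defs.
Variable R : realType.

Definition is_density (p : R -> R) : Prop :=
  measurable_fun setT p /\ (forall x, 0 <= p x) /\
  (\int[lebesgue_measure]_(x in setT) (p x)%:E = 1)%E.

Definition supported_on (p : R -> R) (lo hi : R) : Prop :=
  forall x, (x < lo \/ hi < x) -> p x = 0.

Definition beta_bounded (beta a1 a2 : R) (pm pp : R -> R) : Prop :=
  forall x1 x2, - a2 < x1 < - a1 -> a1 < x2 < a2 ->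
    beta^-1 <= pm x1 / pp x2 <= beta.

Definition a_t (T t : R) : R := expR (t - T).
Definition b_t (T t : R) : R := Num.sqrt (1 - a_t T t ^+ 2).

Definition gauss_pdf (s u : R) : R :=
  expR (- (u ^+ 2) / (2 * s ^+ 2)) / (Num.sqrt (2 * pi) * s).

(* density at x of a X_0 + xi, X_0 ~ p, xi ~ N(0,b^2) independent *)
Definition noised_density (p : R -> R) (a b x : R) : R :=
  \int[lebesgue_measure]_(y in setT) (p y * gauss_pdf b (x - a * y)).

Definition pt_cond1 (p1 : R -> R) (T t x : R) : R :=
  noised_density p1 (a_t T t) (b_t T t) x.
Definition pt_condm1 (pm1 : R -> R) (T t x : R) : R :=
  noised_density pm1 (a_t T t) (b_t T t) x.
Definition pt (p1 pm1 : R -> R) (T t x : R) : R :=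
  2^-1 * pt_cond1 p1 T t x + 2^-1 * pt_condm1 pm1 T t x.

Definition score (f : R -> R) (x : R) : R := derive1 (fun y => ln (f y)) x.

Definition guided_field (w : R) (p1 pm1 : R -> R) (T t x : R) : R :=
  x + (w + 1) * score (pt_cond1 p1 T t) x - w * score (pt p1 pm1 T t) x.

Definition diffq (x : R -> R) (s h : R) : R := h^-1 * (x (s + h) - x s).

End Defs.

From HB Require Import structures.
From mathcomp Require Import all_boot all_order all_algebra.
From mathcomp Require Import all_classical all_reals all_analysis.
From mathcomp Require Import measurable_realfun ring lra.
(* Write [N±] for the noised densities [∫ p^(±1)(y) φ_b(x - a y) dy], φ_b the N(0, b^2)
   density, and [s±] for their scores.  Since [b^2 φ_b'(u) = - u φ_b(u)], the quantity
   [b^2 N±' + x N±] is [∫ p^(±1)(y) a y φ_b(x - a y) dy], so the supports give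
   [b^2 s+ + x >= a α1] and [b^2 s- + x <= - a α1].  The guided field equals
   [x + s+ + w N- (s+ - s-) / (N+ + N-)].  Under the bounds on [α2] and [x] the Gaussian factor
   varies by at most [√w] between the two supports, so [N+ <= √w N-] and the weight
   [N- / (N+ + N-)] is at least [1 / (1 + √w)]; elementary algebra concludes. *)

Set Implicit Arguments. Unset Strict Implicit. Unset Printing Implicit Defensive.
Import Order.TTheory GRing.Theory Num.Theory.
Import numFieldNormedType.Exports.
Local Open Scope classical_set_scope.
Local Open Scope ring_scope.

Definition bounded_continuous (R : realType) (h : R -> R) : Prop :=
  continuous h /\ exists K, forall y, `|h y| <= K.

Section bounded_continuous.
Variable R : realType.
Implicit Types h : R -> R.

Lemma bounded_continuous_cst (c : R) : bounded_continuous (fun=> c).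
Proof. by split; [exact: cst_continuous | exists `|c|]. Qed.

Lemma bounded_continuousZ (c : R) h :
  bounded_continuous h -> bounded_continuous (fun y => c * h y).
Proof.
move=> [ch [K hK]]; split; first by move=> y; apply: cvgM; [exact: cvg_cst | exact: ch].
by exists (`|c| * K) => y; rewrite normrM ler_wpM2l.
Qed.

Lemma bounded_continuousD h1 h2 : bounded_continuous h1 ->
  bounded_continuous h2 -> bounded_continuous (fun y => h1 y + h2 y).
Proof.
move=> [ch1 [K1 hK1]] [ch2 [K2 hK2]]; split.
  by move=> y; apply: cvgD; [exact: ch1 | exact: ch2].
by exists (K1 + K2) => y; apply: le_trans (ler_normD _ _) (lerD _ _).
Qed.

Lemma bounded_continuous_affine h (z a : R) :
  bounded_continuous h -> bounded_continuous (fun y => h (z - a * y)).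
Proof.
move=> [ch [K hK]]; split; last by exists K.
move=> y; apply: (@continuous_comp _ _ _ (fun y => z - a * y) h); last exact: ch.
by apply: cvgB; [exact: cvg_cst | apply: cvgM; [exact: cvg_cst | exact: cvg_id]].
Qed.

End bounded_continuous.

Section gauss_pdf.
Variables (R : realType) (b : R).
Hypothesis b_gt0 : 0 < b.

Definition gauss_pdf' (u : R) : R := - (u / b ^+ 2) * gauss_pdf b u.

Lemma gauss_pdfE u : gauss_pdf b u = expR (- (u ^+ 2) / (2 * b ^+ 2)) * gauss_pdf b 0.
Proof. by rewrite /gauss_pdf expr0n /= oppr0 mul0r expR0 div1r. Qed.

Lemma gauss_pdf_gt0 u : 0 < gauss_pdf b u.
Proof.
rewrite divr_gt0 //; first exact: expR_gt0.
by rewrite mulr_gt0 // sqrtr_gt0 mulr_gt0 // pi_gt0.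
Qed.

Lemma gauss_pdf_le_norm u v : `|u| <= `|v| -> gauss_pdf b v <= gauss_pdf b u.
Proof.
move=> uv; rewrite (gauss_pdfE u) (gauss_pdfE v) ler_pM2r; last exact: gauss_pdf_gt0.
rewrite ler_expR !mulNr lerN2 ler_pM2r; last by rewrite invr_gt0 mulr_gt0 // exprn_gt0.
rewrite -[u ^+ 2]real_normK ?num_real // -[v ^+ 2]real_normK ?num_real //.
by rewrite ler_sqr // nnegrE normr_ge0.
Qed.

Lemma gauss_pdf_le_expRM u v s : v ^+ 2 - u ^+ 2 <= 2 * b ^+ 2 * s ->
  gauss_pdf b u <= expR s * gauss_pdf b v.
Proof.
move=> uv; rewrite (gauss_pdfE u) (gauss_pdfE v) mulrA -expRD.
rewrite ler_pM2r; last exact: gauss_pdf_gt0.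
rewrite ler_expR -subr_ge0.
have b2_gt0 : 0 < 2 * b ^+ 2 by rewrite mulr_gt0 // exprn_gt0.
have -> : s + - v ^+ 2 / (2 * b ^+ 2) - - u ^+ 2 / (2 * b ^+ 2) =
    (2 * b ^+ 2 * s - (v ^+ 2 - u ^+ 2)) / (2 * b ^+ 2).
  by field; rewrite gt_eqF.
by rewrite divr_ge0 ?subr_ge0 // ltW.
Qed.

Lemma is_derive_gauss_pdf (u : R) : is_derive u 1 (gauss_pdf b) (gauss_pdf' u).
Proof.
pose q (y : R) := - y ^+ 2 / (2 * b ^+ 2).
have dq : is_derive u 1 q (- (u / b ^+ 2)).
  have -> : q = (- (2 * b ^+ 2)^-1) \*: (@id R) ^+ 2.
    by apply/funext => y; rewrite /q /= [in RHS]/GRing.scale /= mulrC mulrN mulNr.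
  apply: (is_derive_eq (is_deriveZ _ (is_deriveX 2 (is_derive_id u 1)))).
  by rewrite /GRing.scale /= expr1; field; rewrite gt_eqF // exprn_gt0.
have -> : gauss_pdf b = gauss_pdf b 0 \*: (expR \o q).
  by apply/funext => y; rewrite gauss_pdfE /GRing.scale /= mulrC.
apply: (is_derive_eq (is_deriveZ _ (is_derive1_comp (is_derive_expR _) dq))).
by rewrite /gauss_pdf' (gauss_pdfE u) /GRing.scale /= /q; ring.
Qed.

Lemma bounded_continuous_gauss_pdf : bounded_continuous (gauss_pdf b).
Proof.
split.
  move=> u; apply: differentiable_continuous; apply/derivable1_diffP.
  by have [] := is_derive_gauss_pdf u.
exists (gauss_pdf b 0) => u; rewrite ger0_norm; last exact: ltW (gauss_pdf_gt0 u).
by apply: gauss_pdf_le_norm; rewrite normr0.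
Qed.

(* [|u| <= (1 + 2 b^2) (1 + s) <= (1 + 2 b^2) e^s] with [s = u^2 / (2 b^2)]. *)
Lemma bounded_continuous_gauss_pdf' : bounded_continuous gauss_pdf'.
Proof.
have [cg _] := bounded_continuous_gauss_pdf; split.
  move=> u; apply: cvgM; last exact: cg.
  by apply: cvgN; apply: cvgM; [exact: cvg_id | exact: cvg_cst].
have b2_gt0 : 0 < b ^+ 2 by rewrite exprn_gt0.
exists ((1 + 2 * b ^+ 2) / b ^+ 2 * gauss_pdf b 0) => u.
set s := u ^+ 2 / (2 * b ^+ 2).
have s_ge0 : 0 <= s by rewrite divr_ge0 // ?sqr_ge0 // mulr_ge0 // ltW.
have u_le : `|u| <= (1 + 2 * b ^+ 2) * expR s.
  apply: (le_trans _ (ler_wpM2l _ (expR_ge1Dx s))); last by lra.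
  have u2 : `|u| ^+ 2 = 2 * b ^+ 2 * s.
    by rewrite real_normK ?num_real // /s; field; rewrite gt_eqF.
  have := normr_ge0 u; nra.
have u_div : `|u| / expR s <= 1 + 2 * b ^+ 2 by rewrite ler_pdivrMr // expR_gt0.
rewrite /gauss_pdf' normrM normrN (ger0_norm (ltW (gauss_pdf_gt0 u))) normrM.
have b2inv_ge0 : 0 <= (b ^+ 2)^-1 by rewrite invr_ge0 ltW.
rewrite (ger0_norm b2inv_ge0) gauss_pdfE mulNr -/s expRN.
rewrite mulrA ler_pM2r; last exact: gauss_pdf_gt0.
by rewrite mulrAC ler_pM2r // invr_gt0.
Qed.

End gauss_pdf.

Section density_integral.
Variables (R : realType) (p : R -> R).
Hypothesis p_density : is_density p.
Notation mu := (@lebesgue_measure R).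
Implicit Types h : R -> R.

Lemma density_ge0 y : 0 <= p y.
Proof. by case: p_density => _ []. Qed.

Lemma integrable_densityM h : bounded_continuous h ->
  mu.-integrable setT (EFin \o (fun y => p y * h y)).
Proof.
case: p_density => mp [p_ge0 p1] [ch [K hK]].
have -> : EFin \o (fun y => p y * h y) = ((EFin \o p) \* (EFin \o h))%E.
  by apply/funext => y /=; rewrite EFinM.
apply: integrableMl => //.
- apply/integrableP; split; first exact/measurable_EFinP.
  by under eq_integral do rewrite /= ger0_norm ?p_ge0 //; rewrite p1 ltry.
- exact: continuous_measurable_fun.
exists K; split; first exact: num_real.
by move=> M KM y _ /=; apply: le_trans (hK y) (ltW KM).
Qed.

Lemma Rintegral_densityZl (c : R) h : bounded_continuous h ->
  \int[mu]_(y in setT) (p y * (c * h y)) = c * \int[mu]_(y in setT) (p y * h y).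
Proof.
move=> bh; rewrite -RintegralZl //; last exact: integrable_densityM.
by apply: eq_Rintegral => y _; rewrite mulrCA.
Qed.

Lemma Rintegral_densityD h1 h2 : bounded_continuous h1 -> bounded_continuous h2 ->
  \int[mu]_(y in setT) (p y * (h1 y + h2 y)) =
  \int[mu]_(y in setT) (p y * h1 y) + \int[mu]_(y in setT) (p y * h2 y).
Proof.
move=> bh1 bh2; rewrite -RintegralD //; try exact: integrable_densityM.
by apply: eq_Rintegral => y _; rewrite mulrDr.
Qed.

Lemma Rintegral_density_cst (c : R) : \int[mu]_(y in setT) (p y * c) = c.
Proof.
have := Rintegral_densityZl c (bounded_continuous_cst 1).
under eq_Rintegral do rewrite mulr1; under [in RHS]eq_Rintegral do rewrite mulr1.
case: p_density => _ [_ p1] ->.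
by rewrite /Rintegral p1 mulr1.
Qed.

Lemma ler_Rintegral_density lo hi h1 h2 : supported_on p lo hi ->
  bounded_continuous h1 -> bounded_continuous h2 ->
  (forall y, lo <= y <= hi -> h1 y <= h2 y) ->
  \int[mu]_(y in setT) (p y * h1 y) <= \int[mu]_(y in setT) (p y * h2 y).
Proof.
move=> p_supp bh1 bh2 h12.
apply: le_Rintegral => //; try exact: integrable_densityM.
move=> y _; case: (lerP lo y) => [lo_y|y_lo]; last by rewrite !p_supp ?mul0r //; left.
case: (lerP y hi) => [y_hi|hi_y]; last by rewrite !p_supp ?mul0r //; right.
by rewrite ler_wpM2l ?density_ge0 // h12 // lo_y y_hi.
Qed.

End density_integral.

Section noised_density.
Variables (R : realType) (p : R -> R) (a b : R).
Hypotheses (p_density : is_density p) (b_gt0 : 0 < b).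
Notation mu := (@lebesgue_measure R).

Definition noised_density' (x : R) : R :=
  \int[mu]_(y in setT) (p y * gauss_pdf' b (x - a * y)).

Let bc_gauss x := bounded_continuous_affine x a (bounded_continuous_gauss_pdf b_gt0).
Let bc_gauss' x := bounded_continuous_affine x a (bounded_continuous_gauss_pdf' b_gt0).

Lemma is_derive_noised_density (x : R) :
  is_derive x 1 (noised_density p a b) (noised_density' x).
Proof.
pose f (z y : R) := p y * gauss_pdf b (z - a * y).
have df (z y : R) : is_derive z 1 (f ^~ y) (p y * gauss_pdf' b (z - a * y)).
  have dg := @is_derive1_comp _ _ (center (a * y)) z _ _
    (is_derive_gauss_pdf b_gt0 (z - a * y)) (is_derive_shift z 1 (- (a * y))).
  apply: (is_derive_eq (is_deriveZ (p y) dg)).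
  by rewrite /GRing.scale /= mulr1.
have d1f (z y : R) : partial1of2 f z y = p y * gauss_pdf' b (z - a * y).
  by rewrite partial1of2E; have [_ ->] := df z y.
have [_ [K hK]] := bounded_continuous_gauss_pdf' b_gt0.
have x_in : `](x - 1), (x + 1)[%classic x by rewrite /= in_itv /=; apply/andP; split; lra.
have int_f z : `](x - 1), (x + 1)[%classic z -> mu.-integrable setT (EFin \o f z).
  by move=> _; exact: (integrable_densityM p_density).
have der_f z y : `](x - 1), (x + 1)[%classic z -> setT y -> derivable (f ^~ y) z 1.
  by move=> _ _; have [] := df z y.
have G_ge0 y : 0 <= p y * K.
  by rewrite mulr_ge0 ?(density_ge0 p_density) //; exact: le_trans (normr_ge0 _) (hK 0).
have int_G : mu.-integrable setT (EFin \o (fun y => p y * K)).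
  exact: (integrable_densityM p_density) (bounded_continuous_cst K).
have dom z y : `](x - 1), (x + 1)[%classic z -> setT y -> `|partial1of2 f z y| <= p y * K.
  move=> _ _; rewrite d1f normrM ger0_norm ?(density_ge0 p_density) //.
  by rewrite ler_wpM2l ?(density_ge0 p_density).
have F_derivable := derivable_under_integral measurableT x_in int_f der_f G_ge0 int_G dom.
apply: DeriveDef; first exact: F_derivable.
rewrite -derive1E (differentiation_under_integral measurableT x_in int_f der_f G_ge0 int_G dom).
by apply: eq_Rintegral => y _; rewrite d1f.
Qed.

Variables (lo hi : R).
Hypothesis p_supp : supported_on p lo hi.

Lemma noised_density_moment_bounds (x : R) : 0 <= a ->
  a * lo * noised_density p a b x <= b ^+ 2 * noised_density' x + x * noised_density p a b x
  /\ b ^+ 2 * noised_density' x + x * noised_density p a b x <= a * hi * noised_density p a b x.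
Proof.
move=> a_ge0.
have -> : b ^+ 2 * noised_density' x + x * noised_density p a b x =
    \int[mu]_(y in setT) (p y * (b ^+ 2 * gauss_pdf' b (x - a * y) + x * gauss_pdf b (x - a * y))).
  rewrite (Rintegral_densityD p_density); try exact: bounded_continuousZ.
  by rewrite !(Rintegral_densityZl p_density).
rewrite /noised_density -!(Rintegral_densityZl p_density) //.
have bc_moment := bounded_continuousD (bounded_continuousZ (b ^+ 2) (bc_gauss' x))
  (bounded_continuousZ x (bc_gauss x)).
have momentE y : b ^+ 2 * gauss_pdf' b (x - a * y) + x * gauss_pdf b (x - a * y) =
    a * y * gauss_pdf b (x - a * y).
  by rewrite /gauss_pdf'; field; rewrite gt_eqF // exprn_gt0.
have g_ge0 y := ltW (gauss_pdf_gt0 b_gt0 (x - a * y)).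
split; apply: (ler_Rintegral_density p_density p_supp) => //;
  try exact: bounded_continuousZ; move=> y /andP[lo_y y_hi]; rewrite momentE;
  by rewrite ler_wpM2r // ler_wpM2l.
Qed.

Lemma noised_density_gt0 (x : R) : 0 < noised_density p a b x.
Proof.
pose r := `|x| + `|a| * (`|lo| + `|hi|).
apply: (lt_le_trans (gauss_pdf_gt0 b_gt0 r)).
rewrite -{1}(Rintegral_density_cst p_density (gauss_pdf b r)).
apply: (ler_Rintegral_density p_density p_supp) => //.
  exact: bounded_continuous_cst.
move=> y /andP[lo_y y_hi]; apply: (gauss_pdf_le_norm b_gt0).
have y_le : `|y| <= `|lo| + `|hi|.
  rewrite ler_norml; have := ler_norm lo; have := ler_norm hi.
  have := ler_norm (- lo); have := ler_norm (- hi); rewrite !normrN.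
  move=> *; apply/andP; split; lra.
rewrite (ger0_norm (x := r)); last by rewrite addr_ge0 // mulr_ge0.
apply: le_trans (ler_normB _ _) _; rewrite normrM lerD2l ler_wpM2l //.
Qed.

End noised_density.

Lemma ler_noised_density (R : realType) (p q : R -> R) (lo hi lo' hi' a b x k : R) :
  is_density p -> is_density q -> supported_on p lo hi -> supported_on q lo' hi' ->
  0 < b ->
  (forall y y', lo <= y <= hi -> lo' <= y' <= hi' ->
     gauss_pdf b (x - a * y) <= k * gauss_pdf b (x - a * y')) ->
  noised_density p a b x <= k * noised_density q a b x.
Proof.
move=> p_density q_density p_supp q_supp b_gt0 pq.
have bc_gauss := bounded_continuous_affine x a (bounded_continuous_gauss_pdf b_gt0).
rewrite -[noised_density p a b x](Rintegral_density_cst q_density).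
rewrite /noised_density -(Rintegral_densityZl q_density) //.
apply: (ler_Rintegral_density q_density q_supp) => //.
- exact: bounded_continuous_cst.
- exact: bounded_continuousZ.
move=> y' y'_in; rewrite -(Rintegral_density_cst p_density (k * _)).
apply: (ler_Rintegral_density p_density p_supp) => //.
  exact: bounded_continuous_cst.
by move=> y y_in; exact: pq.
Qed.

Lemma sqr_shift_diff_le (R : realFieldType) (a x al L y y' : R) :
  0 < a -> a ^+ 2 <= 2^-1 -> 0 < al -> al ^+ 2 <= L / 4 -> x <= L / (16 * al) ->
  - al <= y' -> y' <= y -> y <= al ->
  (x - a * y') ^+ 2 - (x - a * y) ^+ 2 <= L / 2.
Proof.
move=> a_gt0 a2_le al_gt0 al2_le x_le y'_ge y'_le y_le.
have a_le1 : a <= 1 by nra.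
have -> : (x - a * y') ^+ 2 - (x - a * y) ^+ 2 =
    2 * a * x * (y - y') + a ^+ 2 * (y' ^+ 2 - y ^+ 2) by ring.
have cross : 2 * a * x * (y - y') <= L / 4.
  have ay_ge0 : 0 <= a * (y - y') by apply: mulr_ge0; lra.
  case: (lerP x 0) => x_sgn; first by nra.
  have : x * (16 * al) <= L by rewrite -ler_pdivlMr // mulr_gt0.
  have : a * (y - y') <= 2 * al by nra.
  nra.
have square : a ^+ 2 * (y' ^+ 2 - y ^+ 2) <= L / 8.
  have : y' ^+ 2 <= al ^+ 2 by case: (lerP 0 y') => y'_sgn; nra.
  have := sqr_ge0 a; have := sqr_ge0 y; nra.
have := sqr_ge0 al; lra.
Qed.

Lemma gauss_pdf_shift_le_sqrt (R : realType) (a b x al w y y' : R) :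
  0 < b -> 2^-1 <= b ^+ 2 -> 0 < a -> a ^+ 2 <= 2^-1 -> 1 <= w -> 0 < al ->
  al ^+ 2 <= ln w / 4 -> x <= ln w / (16 * al) -> - al <= y' -> y' <= y -> y <= al ->
  gauss_pdf b (x - a * y) <= Num.sqrt w * gauss_pdf b (x - a * y').
Proof.
move=> b_gt0 b2_ge a_gt0 a2_le w_ge1 al_gt0 al2_le x_le y'_ge y'_le y_le.
have w_gt0 : 0 < w by lra.
have -> : Num.sqrt w = expR (ln w / 2).
  by rewrite -powR12_sqrt ?ltW // /powR gt_eqF // mulrC.
apply: gauss_pdf_le_expRM => //.
have := sqr_shift_diff_le a_gt0 a2_le al_gt0 al2_le x_le y'_ge y'_le y_le.
have := ln_ge0 w_ge1; nra.
Qed.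

Lemma score_is_derive (R : realType) (f : R -> R) (x d : R) :
  is_derive x 1 f d -> 0 < f x -> score f x = d / f x.
Proof.
move=> df fx_gt0; rewrite /score derive1E mulrC.
by have [_ ->] := is_derive1_comp (is_derive1_ln fx_gt0) df.
Qed.

(* With [w = S^2], [N1, Nm] the two noised densities and [D1, Dm] their derivatives at [x],
   the right-hand side is the guided field. *)
Lemma guided_field_ge (R : realFieldType) (a b x al be S N1 Nm D1 Dm : R) :
  0 < a -> a <= 1 -> b ^+ 2 = 1 - a ^+ 2 -> 0 < b -> 0 < N1 -> 0 < Nm ->
  1 <= S -> N1 <= S * Nm -> 1 <= be -> 0 <= al ->
  a * al * N1 <= b ^+ 2 * D1 + x * N1 -> b ^+ 2 * Dm + x * Nm <= - (a * al * Nm) ->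
  x <= al * S / (2 * be) ->
  a * al * S / (2 * be * b ^+ 2) <=
  x + (S ^+ 2 + 1) * (D1 / N1) - S ^+ 2 * ((D1 + Dm) / (N1 + Nm)).
Proof.
move=> a_gt0 a_le1 b2E b_gt0 N1_gt0 Nm_gt0 S_ge1 N1_le be_ge1 al_ge0 E1_ge Em_le x_le.
set X := al * S / (2 * be) in x_le *.
set E1 := b ^+ 2 * D1 + x * N1 in E1_ge *; set Em := b ^+ 2 * Dm + x * Nm in Em_le *.
have b2_gt0 : 0 < b ^+ 2 by rewrite exprn_gt0.
have N_gt0 : 0 < N1 + Nm by lra.
have X_ge0 : 0 <= X by rewrite divr_ge0 ?mulr_ge0 //; lra.
rewrite -(ler_pM2l b2_gt0).
have -> : b ^+ 2 * (a * al * S / (2 * be * b ^+ 2)) = a * X.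
  by rewrite /X; field; rewrite !gt_eqF //; lra.
have -> : b ^+ 2 * (x + (S ^+ 2 + 1) * (D1 / N1) - S ^+ 2 * ((D1 + Dm) / (N1 + Nm))) =
    - a ^+ 2 * x + E1 / N1 + S ^+ 2 * ((Nm * E1 - N1 * Em) / (N1 * (N1 + Nm))).
  by rewrite /E1 /Em b2E; field; rewrite !gt_eqF.
have score1 : a * al <= E1 / N1 by rewrite ler_pdivlMr.
have gap : 2 * a * al * Nm / (N1 + Nm) <= (Nm * E1 - N1 * Em) / (N1 * (N1 + Nm)).
  rewrite ler_pdivlMr ?mulr_gt0 //.
  have -> : 2 * a * al * Nm / (N1 + Nm) * (N1 * (N1 + Nm)) = 2 * (a * al * N1) * Nm.
    by field; rewrite gt_eqF.
  have := ler_wpM2l (ltW Nm_gt0) E1_ge; have := ler_wpM2l (ltW N1_gt0) Em_le; lra.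
have weight : a * al * S <= S ^+ 2 * (2 * a * al * Nm / (N1 + Nm)).
  have : S * (N1 + Nm) <= 2 * S ^+ 2 * Nm by nra.
  have aal_ge0 : 0 <= a * al by rewrite mulr_ge0 // ltW.
  rewrite mulrA mulrA -mulrA (mulrC (S ^+ 2)) ler_pdivlMr //; nra.
have drift : a ^+ 2 * x <= a * X.
  case: (lerP x 0) => x_sgn; first by nra.
  by rewrite expr2 -mulrA ler_pM2l //; nra.
have X2 : 2 * X <= al * S.
  have -> : 2 * X = al * S / be by rewrite /X; field; rewrite gt_eqF //; lra.
  rewrite ler_pdivrMr; last lra.
  have := mulr_ge0 al_ge0 (le_trans ler01 S_ge1); nra.
have := ler_wpM2l (sqr_ge0 S) gap; have := mulr_ge0 (ltW a_gt0) al_ge0.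
have := mulr_ge0 (mulr_ge0 (ltW a_gt0) al_ge0) (le_trans ler01 S_ge1). 
nra.
Qed.

Lemma a_t_le1 (R : realType) (T t : R) : t <= T -> a_t T t <= 1.
Proof. by move=> tT; rewrite /a_t expR_le1 subr_le0. Qed.

Lemma b_t_sqr (R : realType) (T t : R) :
  a_t T t ^+ 2 <= 1 -> b_t T t ^+ 2 = 1 - a_t T t ^+ 2.
Proof. by move=> a2; rewrite /b_t sqr_sqrtr // subr_ge0. Qed.

Lemma b_t_gt0 (R : realType) (T t : R) : a_t T t ^+ 2 < 1 -> 0 < b_t T t.
Proof. by move=> a2; rewrite /b_t sqrtr_gt0 subr_gt0. Qed.

Section scores.
Variables (R : realType) (p1 pm1 : R -> R) (lo1 hi1 lom1 him1 T t : R).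
Hypotheses (p1_density : is_density p1) (pm1_density : is_density pm1).
Hypotheses (p1_supp : supported_on p1 lo1 hi1) (pm1_supp : supported_on pm1 lom1 him1).
Hypothesis b_gt0 : 0 < b_t T t.

Let d1 x := is_derive_noised_density (a_t T t) p1_density b_gt0 x.
Let dm1 x := is_derive_noised_density (a_t T t) pm1_density b_gt0 x.
Let N1_gt0 x := noised_density_gt0 (a_t T t) p1_density b_gt0 p1_supp x.
Let Nm1_gt0 x := noised_density_gt0 (a_t T t) pm1_density b_gt0 pm1_supp x.

Lemma score_pt_cond1 x : score (pt_cond1 p1 T t) x =
  noised_density' p1 (a_t T t) (b_t T t) x / noised_density p1 (a_t T t) (b_t T t) x.
Proof. exact: score_is_derive (d1 x) (N1_gt0 x). Qed.

Lemma score_pt x : score (pt p1 pm1 T t) x =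
  (noised_density' p1 (a_t T t) (b_t T t) x + noised_density' pm1 (a_t T t) (b_t T t) x) /
  (noised_density p1 (a_t T t) (b_t T t) x + noised_density pm1 (a_t T t) (b_t T t) x).
Proof.
have dpt : is_derive x 1 (pt p1 pm1 T t) (2^-1 * noised_density' p1 (a_t T t) (b_t T t) x +
    2^-1 * noised_density' pm1 (a_t T t) (b_t T t) x).
  have -> : pt p1 pm1 T t = 2^-1 \*: noised_density p1 (a_t T t) (b_t T t) +
      2^-1 \*: noised_density pm1 (a_t T t) (b_t T t) by apply/funext.
  exact: is_deriveD (is_deriveZ _ (d1 x)) (is_deriveZ _ (dm1 x)).
have N1x := N1_gt0 x; have Nm1x := Nm1_gt0 x.
have pt_gt0 : 0 < pt p1 pm1 T t x by rewrite /pt /pt_cond1 /pt_condm1; lra.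
rewrite (score_is_derive dpt pt_gt0) /pt /pt_cond1 /pt_condm1.
by field; rewrite gt_eqF //; lra.
Qed.

End scores.

Unset Implicit Arguments.

Theorem lemma3p2 (R : realType) (alpha1 alpha2 beta T w : R)
  (p1 pm1 : R -> R) (x : R -> R) (t : R) :
  0 < alpha1 -> alpha1 < alpha2 -> 1 <= beta -> 0 < T ->
  is_density p1 -> is_density pm1 ->
  supported_on p1 alpha1 alpha2 -> supported_on pm1 (- alpha2) (- alpha1) ->
  beta_bounded beta alpha1 alpha2 pm1 p1 ->
  1 <= w ->
  alpha2 ^+ 2 <= ln w / 4 ->
  ln w <= alpha1 * Num.sqrt w ->
  (forall s, 0 <= s < T ->
     diffq x s h @[h --> 0^'+] --> guided_field w p1 pm1 T s (x s)) ->
  0 <= t < T ->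
  a_t T t ^+ 2 <= 2^-1 ->
  x t <= Num.min (ln w / (16 * alpha2)) (alpha1 * Num.sqrt w / (2 * beta)) ->
  a_t T t * alpha1 * Num.sqrt w / (2 * beta * b_t T t ^+ 2)
    <= lim (diffq x t h @[h --> 0^'+]).
Proof.
move=> al1_gt0 al12 beta_ge1 _ p1_density pm1_density p1_supp pm1_supp _ w_ge1 al2_le _
  ode t_in a2_le.
rewrite le_min => /andP[x_le1 x_le2].
rewrite (cvg_lim _ (ode t t_in)) // /guided_field.
have b2E : b_t T t ^+ 2 = 1 - a_t T t ^+ 2 by apply: b_t_sqr; lra.
have b_gt0 : 0 < b_t T t by apply: b_t_gt0; lra.
rewrite (score_pt_cond1 p1_density p1_supp b_gt0).
rewrite (score_pt p1_density pm1_density p1_supp pm1_supp b_gt0).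
have a_gt0 : 0 < a_t T t := expR_gt0 _.
have a_le1 : a_t T t <= 1 by apply: a_t_le1; case/andP: t_in => _ /ltW.
set a := a_t T t in a2_le a_gt0 a_le1 b2E *; set b := b_t T t in b_gt0 b2E *.
set S := Num.sqrt w in x_le2 *.
have S_ge1 : 1 <= S by rewrite -sqrtr1 ler_sqrt //; lra.
have -> : w = S ^+ 2 by rewrite sqr_sqrtr //; lra.
have N1_gt0 := noised_density_gt0 a p1_density b_gt0 p1_supp (x t).
have Nm_gt0 := noised_density_gt0 a pm1_density b_gt0 pm1_supp (x t).
have N1_le : noised_density p1 a b (x t) <= S * noised_density pm1 a b (x t).
  apply: (ler_noised_density p1_density pm1_density p1_supp pm1_supp b_gt0).
  move=> y y' /andP[y_ge y_le] /andP[y'_ge y'_le].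
  apply: (gauss_pdf_shift_le_sqrt (al := alpha2)) => //; lra.
have [E1_ge _] := noised_density_moment_bounds p1_density b_gt0 p1_supp (x t) (ltW a_gt0).
have [_ Em_le] := noised_density_moment_bounds pm1_density b_gt0 pm1_supp (x t) (ltW a_gt0).
rewrite mulrN mulNr in Em_le.
exact: guided_field_ge a_gt0 a_le1 b2E b_gt0 N1_gt0 Nm_gt0 S_ge1 N1_le beta_ge1
  (ltW al1_gt0) E1_ge Em_le x_le2.
Qed.
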